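(* Let $\{G_k\}_{k\ge0}$ be a nonnegative real sequence with $G_0=G_1\ge0$ and $G_{k+1}\le\phi_1G_k+\phi_2G_{k-1}$ for all $k\ge1$, where $\phi_1,\phi_2\ge0$ and $\phi_1+\phi_2<1$. Let $\phi=\frac{-\phi_1+\sqrt{\phi_1^2+4\phi_2}}{2}$ (the largest root of $t^2+\phi_1t-\phi_2=0$) and $\rho=\phi+\phi_1$. Then: 1. $G_{k+1}\le(1+\phi)(\phi+\phi_1)^kG_0$ for all $k\ge1$. 2. With $R_1=\frac{1+\phi}{\phi+\rho}$, $R_2=\frac{1-\rho}{\phi+\rho}$, $R_3=\frac{\rho+\phi_2}{\phi+\rho}$, $R_4=\frac{\phi-\phi_2}{\phi+\rho}$: for $k\ge1$ even, $G_{k+1}\le(R_1\rho^{k+1}+R_2\phi^{k+1})G_0$ and $G_k\le(R_1\rho^k-R_2\phi^k)G_0$; for $k\ge1$ odd, $G_{k+1}\le(R_3\rho^k-R_4\phi^k)G_0$ and $G_k\le(R_3\rho^{k-1}+R_4\phi^{k-1})G_0$. Here $0\le\phi<1$ and $0<\rho<1$. *)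

From Stdlib Require Export Reals Arith.
Open Scope R_scope.

(* phi = largest root of t^2 + phi1 t - phi2 = 0 *)
Definition phi_of (phi1 phi2 : R) : R :=
  (- phi1 + sqrt (phi1 ^ 2 + 4 * phi2)) / 2.

Definition rho_of (phi1 phi2 : R) : R := phi_of phi1 phi2 + phi1.

(** The majorant is obtained by solving the recurrence with equality: its
    characteristic polynomial [t^2 - phi1 t - phi2] has the roots [rho] and
    [-phi], so [E k = R1 rho^k - R2 (-phi)^k] is the solution with
    [E 0 = E 1 = 1], and since the coefficients are nonnegative, [G] stays below
    [E k * G 0] by induction.  The parity of [k] fixes the sign of [(-phi)^k],
    which gives the four bounds of part 2.  Part 1 is cruder: because
    [phi rho = phi2], the quantity [G (k+1) + phi G k] contracts by the factor
    [rho] at each step. *)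

From Stdlib Require Import Reals Lra Lia Psatz.
Open Scope R_scope.

Lemma pow_opp_even (x : R) (k : nat) : Nat.Even k -> (- x) ^ k = x ^ k.
Proof.
  intros [m ->]. rewrite !pow_mult. f_equal. ring.
Qed.

Lemma pow_opp_odd (x : R) (k : nat) : Nat.Odd k -> (- x) ^ k = - x ^ k.
Proof.
  intros [m ->]. rewrite Nat.add_1_r, <- !tech_pow_Rmult, pow_opp_even.
  - ring.
  - now exists m.
Qed.

Lemma geometric_bound (u : nat -> R) (r : R) :
  0 <= r -> (forall k, u (S k) <= r * u k) -> forall k, u k <= r ^ k * u 0%nat.
Proof.
  intros hr hu k. induction k as [|k IH]; simpl.
  - lra.
  - specialize (hu k). nra.
Qed.

Lemma linear_recurrence_comparison (a b : R) (u v : nat -> R) :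
  0 <= a -> 0 <= b ->
  (forall k, u (S (S k)) <= a * u (S k) + b * u k) ->
  (forall k, v (S (S k)) = a * v (S k) + b * v k) ->
  u 0%nat <= v 0%nat -> u 1%nat <= v 1%nat ->
  forall k, u k <= v k.
Proof.
  intros ha hb hu hv h0 h1.
  assert (hpair : forall k, u k <= v k /\ u (S k) <= v (S k)).
  { induction k as [|k [IH0 IH1]]; [easy|].
    split; [exact IH1|].
    rewrite hv. specialize (hu k). nra. }
  intro k. apply hpair.
Qed.

Lemma pow_combination_recurrence (a b r s c d : R) :
  r ^ 2 = a * r + b -> s ^ 2 = a * s + b ->
  forall k, c * r ^ S (S k) - d * s ^ S (S k)
            = a * (c * r ^ S k - d * s ^ S k) + b * (c * r ^ k - d * s ^ k).
Proof.
  intros hr hs k. rewrite <- !tech_pow_Rmult.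
  replace (r * (r * r ^ k)) with (r ^ 2 * r ^ k) by ring.
  replace (s * (s * s ^ k)) with (s ^ 2 * s ^ k) by ring.
  rewrite hr, hs. ring.
Qed.

Section SecondOrderRecurrence.

Variables phi1 phi2 : R.
Hypotheses (hphi1 : 0 <= phi1) (hphi2 : 0 <= phi2).

Local Notation phi := (phi_of phi1 phi2).
Local Notation rho := (rho_of phi1 phi2).

Lemma sqrt_discriminant_ge : phi1 <= sqrt (phi1 ^ 2 + 4 * phi2).
Proof.
  rewrite <- (sqrt_pow2 phi1) at 1 by exact hphi1.
  apply sqrt_le_1_alt. lra.
Qed.

Lemma phi_of_quadratic : phi ^ 2 + phi1 * phi = phi2.
Proof.
  assert (hs := sqrt_sqrt (phi1 ^ 2 + 4 * phi2) ltac:(nra)).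
  unfold phi_of. nra.
Qed.

Lemma phi_of_nonneg : 0 <= phi.
Proof. assert (hs := sqrt_discriminant_ge). unfold phi_of. lra. Qed.

Lemma phi_mul_rho : phi * rho = phi2.
Proof. assert (h := phi_of_quadratic). unfold rho_of. lra. Qed.

Lemma rho_of_root : rho ^ 2 = phi1 * rho + phi2.
Proof. assert (h := phi_of_quadratic). unfold rho_of. lra. Qed.

Lemma opp_phi_of_root : (- phi) ^ 2 = phi1 * (- phi) + phi2.
Proof. assert (h := phi_of_quadratic). lra. Qed.

Lemma rho_of_lt_1 : phi1 + phi2 < 1 -> rho < 1.
Proof.
  intro hsum. assert (hphi := phi_of_nonneg). assert (hroot := rho_of_root).
  unfold rho_of in *.
  (* [t^2 - phi1 t - phi2] vanishes at [rho >= phi1 / 2], is increasing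
     beyond [phi1 / 2] and is positive at [1]. *)
  nra.
Qed.

Hypothesis hpos : 0 < phi1 + phi2.

Lemma rho_of_pos : 0 < rho.
Proof.
  assert (hphi := phi_of_nonneg). assert (hroot := rho_of_root).
  unfold rho_of in *. nra.
Qed.

Local Notation R1 := ((1 + phi) / (phi + rho)).
Local Notation R2 := ((1 - rho) / (phi + rho)).
Local Notation R3 := ((rho + phi2) / (phi + rho)).
Local Notation R4 := ((phi - phi2) / (phi + rho)).

Lemma R3_pow (k : nat) : R3 * rho ^ k = R1 * rho ^ S k.
Proof.
  assert (hrho := rho_of_pos). assert (hphi := phi_of_nonneg).
  assert (hmul := phi_mul_rho). set (p := phi) in *. set (r := rho) in *.
  rewrite <- hmul, <- tech_pow_Rmult. field. lra.
Qed.

Lemma R4_pow (k : nat) : R4 * phi ^ k = R2 * phi ^ S k.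
Proof.
  assert (hrho := rho_of_pos). assert (hphi := phi_of_nonneg).
  assert (hmul := phi_mul_rho). set (p := phi) in *. set (r := rho) in *.
  rewrite <- hmul, <- tech_pow_Rmult. field. lra.
Qed.

Variable G : nat -> R.
Hypothesis hrec : forall k, G (S (S k)) <= phi1 * G (S k) + phi2 * G k.

Lemma succ_geometric_bound (hG : forall k, 0 <= G k) (hG01 : G 0%nat = G 1%nat) :
  forall k, G (S k) <= (1 + phi) * rho ^ k * G 0%nat.
Proof.
  assert (hphi := phi_of_nonneg). assert (hrho := rho_of_pos).
  assert (hcontract : forall k, G (S (S k)) + phi * G (S k)
                                <= rho * (G (S k) + phi * G k)).
  { intro k. specialize (hrec k). assert (hmul := phi_mul_rho).
    unfold rho_of in *. nra. }
  intro k.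
  assert (hk := geometric_bound _ _ (Rlt_le _ _ hrho) hcontract k).
  specialize (hG k). cbv beta in hk. rewrite <- hG01 in hk. nra.
Qed.

Lemma closed_form_bound (hG01 : G 0%nat = G 1%nat) :
  forall k, G k <= (R1 * rho ^ k - R2 * (- phi) ^ k) * G 0%nat.
Proof.
  assert (hphi := phi_of_nonneg). assert (hrho := rho_of_pos).
  apply linear_recurrence_comparison with (a := phi1) (b := phi2); auto.
  - intro k.
    rewrite (pow_combination_recurrence _ _ _ _ R1 R2 rho_of_root
               opp_phi_of_root k).
    ring.
  - right. simpl. field. lra.
  - right. rewrite <- hG01. simpl. field. lra.
Qed.

End SecondOrderRecurrence.

Theorem theorem1 (G : nat -> R) (phi1 phi2 : R)
  (hG : forall k, 0 <= G k)
  (hG01 : G 0%nat = G 1%nat) (hG0 : 0 <= G 0%nat)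
  (hrec : forall k, (1 <= k)%nat -> G (S k) <= phi1 * G k + phi2 * G (k - 1)%nat)
  (hphi1 : 0 <= phi1) (hphi2 : 0 <= phi2) (hsum : phi1 + phi2 < 1)
  (hpos : 0 < phi1 + phi2) :
  let phi := phi_of phi1 phi2 in
  let rho := rho_of phi1 phi2 in
  let R1 := (1 + phi) / (phi + rho) in
  let R2 := (1 - rho) / (phi + rho) in
  let R3 := (rho + phi2) / (phi + rho) in
  let R4 := (phi - phi2) / (phi + rho) in
  (0 <= phi < 1 /\ 0 < rho < 1) /\
  (forall k, (1 <= k)%nat -> G (S k) <= (1 + phi) * (phi + phi1) ^ k * G 0%nat) /\
  (forall k, (1 <= k)%nat -> Nat.Even k ->
     G (S k) <= (R1 * rho ^ (S k) + R2 * phi ^ (S k)) * G 0%nat /\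
     G k <= (R1 * rho ^ k - R2 * phi ^ k) * G 0%nat) /\
  (forall k, (1 <= k)%nat -> Nat.Odd k ->
     G (S k) <= (R3 * rho ^ k - R4 * phi ^ k) * G 0%nat /\
     G k <= (R3 * rho ^ (k - 1) + R4 * phi ^ (k - 1)) * G 0%nat).
Proof.
  intros phi rho R1 R2 R3 R4.
  assert (hrec' : forall k, G (S (S k)) <= phi1 * G (S k) + phi2 * G k).
  { intro k. rewrite <- (Nat.sub_1_r (S k)) at 3. apply hrec. lia. }
  assert (hE : forall k, G k <= (R1 * rho ^ k - R2 * (- phi) ^ k) * G 0%nat)
    by exact (closed_form_bound phi1 phi2 hphi1 hphi2 hpos G hrec' hG01).
  split; [|split; [|split]].
  - assert (hphi : 0 <= phi) by exact (phi_of_nonneg phi1 phi2 hphi1 hphi2).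
    assert (hrho0 : 0 < rho) by exact (rho_of_pos phi1 phi2 hphi1 hphi2 hpos).
    assert (hrho1 : rho < 1) by exact (rho_of_lt_1 phi1 phi2 hphi1 hphi2 hsum).
    assert (hrho : rho = phi + phi1) by reflexivity.
    lra.
  - intros k _. exact (succ_geometric_bound phi1 phi2 hphi1 hphi2 hpos G hrec' hG hG01 k).
  - intros k _ hk. assert (hk' : Nat.Odd (S k)) by now apply Nat.Odd_succ.
    assert (hEk := hE k). assert (hESk := hE (S k)).
    rewrite pow_opp_even in hEk by exact hk. rewrite pow_opp_odd in hESk by exact hk'.
    split; lra.
  - intros [|k] hk_pos hk; [lia|]. rewrite Nat.sub_1_r. simpl Nat.pred.
    assert (hk' : Nat.Even (S (S k))) by now apply Nat.Even_succ.
    assert (hEk := hE (S k)). assert (hESk := hE (S (S k))).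
    rewrite pow_opp_odd in hEk by exact hk. rewrite pow_opp_even in hESk by exact hk'.
    assert (hR3 : forall n, R3 * rho ^ n = R1 * rho ^ S n)
      by exact (R3_pow phi1 phi2 hphi1 hphi2 hpos).
    assert (hR4 : forall n, R4 * phi ^ n = R2 * phi ^ S n)
      by exact (R4_pow phi1 phi2 hphi1 hphi2 hpos).
    rewrite !hR3, !hR4.
    split; lra.
Qed.
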